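(* The characters (non-zero complex homomorphisms, not necessarily continuous) of $C(X)'_{00}$ are, without multiple occurrences, the following, where $\sum_kf_k\delta^k\in C(X)'_{00}$: (i) for $x\notin\bigcup_{q\ge1}\mathrm{Fix}_q(\sigma)^\circ$: $\omega_x\big(\sum_kf_k\delta^k\big)=f_0(x)$; (ii) for $x\in\bigcup_{q\ge1}\mathrm{Fix}_q(\sigma)^\circ$ and $c\in\mathbb{C}\setminus\{0\}$: $\omega_{x,c}\big(\sum_kf_k\delta^k\big)=\sum_jf_{jn}(x)c^j$, where $n$ is the minimal $n\ge1$ such that $x\in\mathrm{Fix}_n(\sigma)^\circ$.
   Context: Let $X$ be a non-empty compact Hausdorff space and $\sigma:X\to X$ a homeomorphism; $\mathrm{Fix}_k(\sigma)=\{x:\sigma^kx=x\}$, superscript $\circ$ denotes interior, $\mathrm{supp}(f)$ the closure of $\{f\ne0\}$. $C(X)$ is the algebra of continuous complex functions. $c_{00}(\Sigma)$ is the unital algebra of finite formal sums $\sum_kf_k\delta^k$ ($f_k\in C(X)$) with multiplication determined by $f\delta^k\cdot g\delta^l=f\,(g\circ\sigma^{-k})\,\delta^{k+l}$; $C(X)$ is embedded as $\{f\delta^0\}$. $C(X)'_{00}$ is the commutant of $C(X)$ in $c_{00}(\Sigma)$; it equals $\{\sum_kf_k\delta^k:\mathrm{supp}(f_k)\subset\mathrm{Fix}_k(\sigma)\ \forall k\}$ and is commutative. *)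

From HB Require Import structures.
From mathcomp Require Import all_boot all_order all_algebra.
From mathcomp Require Import complex.
From mathcomp Require Import all_classical all_reals all_analysis.
Set Implicit Arguments. Unset Strict Implicit. Unset Printing Implicit Defensive.
Import Order.TTheory GRing.Theory Num.Theory.
Import numFieldNormedType.Exports.
Local Open Scope classical_set_scope.
Local Open Scope ring_scope.

(* the complex numbers, with the analysis (norm) topology of a numFieldType *)
Definition Cplx (R : realType) : numClosedFieldType := R[i].

Section Defs.
Variables (R : realType) (X : topologicalType) (sigma sigmai : X -> X).
Local Notation C := (Cplx R).

(* integer iterates sigma^k, with sigmai the inverse homeomorphism *)
Definition zpow (k : int) : X -> X :=
  match k with Posz n => iter n sigma | Negz n => iter n.+1 sigmai end.

Definition Fix (k : nat) : set X := [set x | iter k sigma x = x].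

Definition UFix : set X := \bigcup_(q in [set q : nat | (0 < q)%N]) (Fix q)°.

Definition min_int_period (x : X) (n : nat) : Prop :=
  (0 < n)%N /\ (Fix n)° x /\ forall m : nat, (0 < m < n)%N -> ~ (Fix m)° x.

(* Formal sums sum_k f_k delta^k are represented by their coefficient
   function k |-> f_k. *)
Definition fsum := int -> X -> C.

Definition c00 : set fsum :=
  [set a | (exists N : nat, forall k : int, (N < `|k|)%N -> a k = (fun=> 0))
           /\ forall k, continuous (a k)].

Definition fadd (a b : fsum) : fsum := fun k x => a k x + b k x.
Definition fscale (l : C) (a : fsum) : fsum := fun k x => l * a k x.
(* f delta^k * g delta^l = f (g o sigma^{-k}) delta^{k+l} *)
Definition fmul (a b : fsum) : fsum :=
  fun m x => \sum_(k \in [set: int]) a k x * b (m - k) (zpow (- k) x).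
Definition emb (f : X -> C) : fsum := fun k => if k == 0 then f else (fun=> 0).

Definition commutant00 : set fsum :=
  [set a | c00 a /\ forall f : X -> C, continuous f ->
                       fmul (emb f) a = fmul a (emb f)].

(* characters: non-zero (not necessarily continuous) complex algebra
   homomorphisms on C(X)'_00; only the values on C(X)'_00 matter *)
Definition is_character (w : fsum -> C) : Prop :=
  [/\ {in commutant00 &, forall a b, w (fadd a b) = w a + w b},
      forall l, {in commutant00, forall a, w (fscale l a) = l * w a},
      {in commutant00 &, forall a b, w (fmul a b) = w a * w b} &
      exists2 a, commutant00 a & w a != 0].

Definition omega1 (x : X) (a : fsum) : C := a 0 x.
Definition omega2 (n : nat) (x : X) (c : C) (a : fsum) : C :=
  \sum_(j \in [set: int]) a (j * n%:Z) x * c ^ j.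

End Defs.

(* A character w restricts to a character of C(X), hence to evaluation at some
   point x: the zero sets of continuous functions in its kernel form a proper
   filter base (|g1|^2 + |g2|^2 lies in the kernel, and a nowhere vanishing
   function is invertible), and a cluster point of it is a common zero.
   Elements of the commutant are finite sums of monomials f_k delta^k with f_k
   supported in Fix_k.  Writing f_k = (f_k / |f_k|^(1/2)) * |f_k|^(1/2) moves a
   factor vanishing at x into C(X), so w kills every monomial with f_k(x) = 0;
   hence only the k with x in the interior of Fix_k contribute.  If there are
   none besides k = 0, w = omega_x.  Otherwise these k are the multiples of the
   minimal period n, and for a bump u at x supported in Fix_n multiplicativity
   gives w (f delta^(jn)) = f(x) c^j with c = w (u delta^n), i.e. w = omega_(x,c).
   Conversely both formulas are characters (a Cauchy product for omega_(x,c)),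
   and they are told apart by their values on C(X) and on u delta^n. *)

From HB Require Import structures.
From mathcomp Require Import all_boot all_order all_algebra.
From mathcomp Require Import complex.
From mathcomp Require Import all_classical all_reals all_analysis.
From mathcomp Require Import finmap zify.
Import Order.TTheory GRing.Theory Num.Theory.
Import numFieldNormedType.Exports.
Set Implicit Arguments. Unset Strict Implicit. Unset Printing Implicit Defensive.
Local Open Scope classical_set_scope.
Local Open Scope ring_scope.

Section FinitelySupportedSums.
Variable V : nmodType.
Implicit Types (F : int -> V) (N : nat).

Definition vanishes_beyond N F := forall k : int, (N < `|k|)%N -> F k = 0.

Definition window N : {fset int} :=
  [fset (i%:Z - N%:Z) | i in iota 0 (2 * N).+1]%fset.

Lemma mem_window N k : (k \in window N) = (`|k| <= N)%N.
Proof.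
apply/imfsetP/idP => [[i /= + ->]|kN]; first by rewrite ?inE mem_iota; lia.
by exists (absz (k + N%:Z)); rewrite /= ?inE ?mem_iota; lia.
Qed.

Lemma vanishes_beyondW N M F : (N <= M)%N -> vanishes_beyond N F -> vanishes_beyond M F.
Proof. by move=> NM FN k kM; apply: FN; exact: leq_ltn_trans kM. Qed.

Lemma vanishes_beyond_mulz N n F : (0 < n)%N -> vanishes_beyond N F ->
  vanishes_beyond N (fun j => F (j * n%:Z)).
Proof.
by move=> n0 FN j jN; apply: FN; rewrite abszM /=; apply: leq_trans jN _; rewrite leq_pmulr.
Qed.

Lemma fsbigT_window N F : vanishes_beyond N F ->
  \sum_(k \in [set: int]) F k = \sum_(k <- window N) F k.
Proof. by move=> FN; apply: fsbigTE => k; rewrite mem_window -ltnNge; exact: FN. Qed.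

Lemma fsbigT_int1 F j : (forall k, k != j -> F k = 0) ->
  \sum_(k \in [set: int]) F k = F j.
Proof.
by move=> Fj; rewrite (fsbigTE [fset j]%fset) ?big_seq_fset1 // => k; rewrite inE => /Fj.
Qed.

Lemma fsbigT_split N F G : vanishes_beyond N F -> vanishes_beyond N G ->
  \sum_(k \in [set: int]) (F k + G k) =
  \sum_(k \in [set: int]) F k + \sum_(k \in [set: int]) G k.
Proof.
move=> FN GN; rewrite (fsbigT_window FN) (fsbigT_window GN) -big_split.
by apply: fsbigT_window => k kN; rewrite FN // GN // addr0.
Qed.

Lemma exchange_fsbigT N (F : int -> int -> V) :
  (forall i j, (N < `|i|)%N || (N < `|j|)%N -> F i j = 0) ->
  \sum_(i \in [set: int]) \sum_(j \in [set: int]) F i j =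
  \sum_(j \in [set: int]) \sum_(i \in [set: int]) F i j.
Proof.
move=> FN; have inner i : \sum_(j \in [set: int]) F i j = \sum_(j <- window N) F i j.
  by apply: fsbigT_window => j jN; rewrite FN // jN orbT.
have inner' j : \sum_(i \in [set: int]) F i j = \sum_(i <- window N) F i j.
  by apply: fsbigT_window => i iN; rewrite FN // iN.
under eq_fsbigr do rewrite inner; under [RHS]eq_fsbigr do rewrite inner'.
rewrite (@fsbigT_window N); last by move=> i iN; apply: big1 => j _; rewrite FN ?iN.
rewrite [RHS](@fsbigT_window N); last first.
  by move=> j jN; apply: big1 => i _; rewrite FN // jN orbT.
exact: exchange_big.
Qed.

Lemma fsbigT_mulz (n : int) F : n != 0 -> (forall k, ~~ (n %| k)%Z -> F k = 0) ->
  \sum_(j \in [set: int]) F (j * n) = \sum_(k \in [set: int]) F k.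
Proof.
move=> n0 Fn; rewrite -fsbig_image; last by move=> i j _ _ /mulIf; apply.
apply: fsbig_widen => // k [_ kn]; apply: Fn; apply: contra_notN kn => /divzK kE.
by exists (k %/ n)%Z.
Qed.

End FinitelySupportedSums.

Lemma fsbigT_cauchy (K : fieldType) N (A B : int -> K) (c : K) : c != 0 ->
  vanishes_beyond N A -> vanishes_beyond N B ->
  \sum_(j \in [set: int]) (\sum_(i \in [set: int]) A i * B (j - i)) * c ^ j =
  (\sum_(i \in [set: int]) A i * c ^ i) * (\sum_(l \in [set: int]) B l * c ^ l).
Proof.
move=> c0 AN BN; under eq_fsbigr do rewrite mulr_fsuml.
rewrite (@exchange_fsbigT _ (2 * N)); last first.
  move=> j i; case: (leqP `|i| N) => iN; last by rewrite AN // !mul0r.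
  by move=> /orP jiN; rewrite BN ?mulr0 ?mul0r //; lia.
rewrite mulr_fsuml; apply: eq_fsbigr => i _; rewrite mulr_fsumr.
rewrite [RHS](reindex_fsbigT (fun j => j - i)); last first.
  by exists (+%R^~ i) => j; rewrite ?addrK ?subrK.
apply: eq_fsbigr => j _; rewrite [c ^ j in LHS](_ : _ = c ^ i * c ^ (j - i)).
  by rewrite mulrACA mulrA.
by rewrite -expfzDr // addrC subrK.
Qed.

Section SqrtNorm.
Variable R : realType.
Local Notation C := (Cplx R).
Local Open Scope complex_scope.

Lemma continuous_Re : continuous (fun z : C => complex.Re z).
Proof.
move=> z; apply/(@cvgrPdist_lt _ _ _ _ (nbhs_filter z)) => e e0.
have e0C : (0 : C) < e%:C by rewrite ltcR.
near=> y; rewrite -raddfB -ltcR; apply: le_lt_trans (normc_ge_Re _) _.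
by near: y; exact: (@cvgr_dist_lt _ _ _ _ (nbhs_filter z) id _ cvg_id _ e0C).
Unshelve. all: by end_near. Qed.

Lemma continuous_complexR : continuous (fun r : R => r%:C : C).
Proof.
move=> r; apply/(@cvgrPdist_lt _ _ _ _ (nbhs_filter r)) => -[a b].
rewrite ltcE /= => /andP[/eqP -> a0]; near=> s.
rewrite -raddfB normc_def /= expr0n addr0 sqrtr_sqr ltcR.
by near: s; exact: (@cvgr_dist_lt _ _ _ _ (nbhs_filter r) id _ cvg_id _ a0).
Unshelve. all: by end_near. Qed.

Lemma continuous_conjC : continuous (fun z : C => z^*%R).
Proof.
move=> z; apply/(@cvgrPdist_lt _ _ _ _ (nbhs_filter z)) => e e0; near=> y.
rewrite -rmorphB norm_conjC; near: y.
exact: (@cvgr_dist_lt _ _ _ _ (nbhs_filter z) id _ cvg_id _ e0).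
Unshelve. all: by end_near. Qed.

Definition sqrt_norm (z : C) : C := (Num.sqrt (complex.Re `|z|))%:C.

Lemma sqrt_norm_sqr z : sqrt_norm z ^+ 2 = `|z|.
Proof.
have Re_norm : (complex.Re `|z|)%:C = `|z| by rewrite RRe_real ?normr_real.
by rewrite -rmorphXn sqr_sqrtr // -lecR Re_norm normr_ge0.
Qed.

Lemma sqrt_norm_ge0 z : 0 <= sqrt_norm z.
Proof. by rewrite lecR sqrtr_ge0. Qed.

Lemma sqrt_norm_eq0 z : (sqrt_norm z == 0) = (z == 0).
Proof. by rewrite -[z == 0]normr_eq0 -sqrt_norm_sqr expf_eq0. Qed.

Lemma sqrt_normK z : sqrt_norm z * (z / sqrt_norm z) = z.
Proof.
have [->|z0] := eqVneq z 0; first by rewrite mul0r mulr0.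
by rewrite mulrC divfK // sqrt_norm_eq0.
Qed.

Lemma sqrt_norm0 : sqrt_norm 0 = 0.
Proof. by apply/eqP; rewrite sqrt_norm_eq0. Qed.

Lemma norm_div_sqrt_norm z : `|z / sqrt_norm z| = sqrt_norm z.
Proof.
have [->|z0] := eqVneq z 0; first by rewrite mul0r normr0 sqrt_norm0.
rewrite normrM normfV (ger0_norm (sqrt_norm_ge0 z)) -sqrt_norm_sqr.
by rewrite mulfK // sqrt_norm_eq0.
Qed.

Lemma continuous_sqrt_norm : continuous sqrt_norm.
Proof.
move=> z; apply: (@continuous_comp C R C (fun z : C => Num.sqrt (complex.Re `|z|))
  (fun r : R => r%:C : C)); last exact: continuous_complexR.
apply: (@continuous_comp C R R (fun z : C => complex.Re `|z|)); last exact: sqrt_continuous.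
apply: (@continuous_comp C C R (@Num.norm _ C)); last exact: continuous_Re.
exact: norm_continuous.
Qed.

Lemma continuous_div_sqrt_norm : continuous (fun z : C => z / sqrt_norm z).
Proof.
move=> z; have [->|z0] := eqVneq z 0; last first.
  apply: (@continuousM _ _ id (fun z => (sqrt_norm z)^-1)) => //.
  by apply: continuousV; [rewrite sqrt_norm_eq0 | exact: continuous_sqrt_norm].
apply/(@cvgrPdist_lt _ _ _ _ (nbhs_filter (0 : C))) => e e0; rewrite mul0r.
have /(@cvgrPdist_lt _ _ _ _ (nbhs_filter (0 : C)))/(_ e e0) := @continuous_sqrt_norm 0.
apply: filterS => y; rewrite sqrt_norm0 !sub0r !normrN norm_div_sqrt_norm.
by rewrite ger0_norm ?sqrt_norm_ge0.
Qed.
End SqrtNorm.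

Section ContinuousFunctions.
Variables (R : realType) (X : topologicalType).
Hypotheses (hX : hausdorff_space X) (cX : compact [set: X]).
Local Notation C := (Cplx R).
Local Open Scope complex_scope.

Lemma exists_bump (x : X) (U : set X) : open U -> U x ->
  exists f : X -> C, [/\ continuous f, f x = 1 & forall y, ~ U y -> f y = 0].
Proof.
move=> oU Ux; have cr : completely_regular_space X.
  exact: normal_completely_regular (compact_normal hX cX) (hausdorff_accessible hX).
have /(@uniform_separatorP _ R) [g [cg _ g0 g1]] : uniform_separator [set x] (~` U).
  by apply: cr; [exact: open_closedC | move=> /(_ Ux)].
exists (fun y => (1 - g y)%:C); split.
- move=> y; apply: (@continuous_comp X R C (fun y => 1 - g y) (fun r : R => r%:C : C)).
    by apply: cvgB; [exact: cvg_cst | exact: cg].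
  exact: continuous_complexR.
- by rewrite (g0 (g x)) ?subr0 //; exists x.
- by move=> y nUy; rewrite (g1 (g y)) ?subrr //; exists y.
Qed.

Lemma exists_separating (x y : X) : x != y ->
  exists f : X -> C, [/\ continuous f, f x = 1 & f y = 0].
Proof.
move=> xy; have cly : closed [set y].
  by apply: accessible_closed_set1; exact: hausdorff_accessible.
have [f [cf fx fy]] := exists_bump (x := x) (closed_openC cly) (elimN eqP xy).
by exists f; split => //; apply: fy => /(_ erefl).
Qed.

End ContinuousFunctions.

Lemma near_neq0 (T : topologicalType) (K : numFieldType) (h : T -> K) x :
  {for x, continuous h} -> h x != 0 -> \forall y \near x, h y != 0.
Proof.
move=> ch hx; have hx0 : 0 < `|h x| by rewrite normr_gt0.
have := @cvgr_dist_lt _ _ _ _ (nbhs_filter x) _ _ ch _ hx0.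
by apply: filterS => y; apply: contraTneq => ->; rewrite subr0 ltxx.
Qed.

Section Periods.
Variables (X : topologicalType) (sigma : X -> X).
Local Notation Fix := (Fix sigma).

Lemma Fix_dvd m n y : (m %| n)%N -> Fix m y -> Fix n y.
Proof.
move=> /dvdnP[k ->]; rewrite /Fix /= => ym; elim: k => // k IH.
by rewrite mulSn iterD IH ym.
Qed.

Lemma Fix_gcd m n y : Fix m y -> Fix n y -> Fix (gcdn m n) y.
Proof.
have [->|m0] := posnP m; first by rewrite gcd0n.
move=> ym yn; have [a _ /Fix_dvd /(_ ym)] := Bezoutl n m0.
have yan : iter (a * n) sigma y = y by apply: Fix_dvd yn; exact: dvdn_mull.
by rewrite /Fix /= iterD yan.
Qed.

Lemma Fix_absz_add (k l : int) y : Fix `|k| y -> Fix `|l| y -> Fix `|k + l| y.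
Proof.
move=> yk yl; apply: Fix_dvd (Fix_gcd yk yl).
have : (gcdz k l %| k + l)%Z by rewrite rpredD ?dvdz_gcdl ?dvdz_gcdr.
by rewrite dvdzE.
Qed.

Lemma Fix_mulz n (j : int) y : Fix n y -> Fix `|j * n%:Z| y.
Proof. by apply: Fix_dvd; rewrite abszM dvdn_mull. Qed.

Lemma interior_Fix_gcd m n x : (Fix m)° x -> (Fix n)° x -> (Fix (gcdn m n))° x.
Proof. by move=> ym yn; apply: filterS (filterI ym yn) => y []; exact: Fix_gcd. Qed.

Lemma min_int_period_dvd x n m :
  min_int_period sigma x n -> (Fix m)° x -> (n %| m)%N.
Proof.
move=> [n0 [xn nmin]] xm; have xg := interior_Fix_gcd xm xn.
have g0 : (0 < gcdn m n)%N by rewrite gcdn_gt0 n0 orbT.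
have [gn|ng] := ltnP (gcdn m n) n; first by case: (nmin _ _ xg); rewrite g0 gn.
have -> : n = gcdn m n by apply/eqP; rewrite eqn_leq ng dvdn_leq ?dvdn_gcdr.
exact: dvdn_gcdl.
Qed.

Lemma min_int_period_uniq x n m :
  min_int_period sigma x n -> min_int_period sigma x m -> n = m.
Proof.
move=> xn xm; apply/eqP; rewrite eqn_dvd.
by rewrite (min_int_period_dvd xn xm.2.1) (min_int_period_dvd xm xn.2.1).
Qed.

Lemma UFix_min_int_period x : UFix sigma x -> exists n, min_int_period sigma x n.
Proof.
case=> q q0 xq; have exP : exists m, (0 < m)%N && `[< (Fix m)° x >].
  by exists q; rewrite q0; apply/asboolP.
case: (ex_minnP exP) => n /andP[n0 /asboolP xn] nmin; exists n; split=> //; split=> //.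
move=> m /andP[m0 mn] xm; have := nmin m; rewrite m0 => /(_ (asboolT xm)).
by rewrite leqNgt mn.
Qed.
End Periods.

Lemma continuous_iter (T : topologicalType) (f : T -> T) n :
  continuous f -> continuous (iter n f).
Proof.
move=> cf; elim: n => [|n IH] x; first exact: cvg_id.
exact: continuous_comp (IH x) (cf _).
Qed.

Section Commutant.
Variables (R : realType) (X : topologicalType) (sigma sigmai : X -> X).
Hypotheses (hX : hausdorff_space X) (cX : compact [set: X]).
Hypotheses (cs : continuous sigma) (csi : continuous sigmai).
Hypotheses (sigmaK : cancel sigma sigmai) (sigmaiK : cancel sigmai sigma).
Local Notation C := (Cplx R).
Local Notation fsum := (fsum R X).
Local Notation zpow := (zpow sigma sigmai).
Local Notation Fix := (Fix sigma).
Local Notation fmul := (fmul (R:=R) sigma sigmai).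
Local Notation commutant00 := (commutant00 (R:=R) sigma sigmai).
Local Notation is_character := (is_character (R:=R) sigma sigmai).
Local Notation omega1 := (omega1 (R:=R) (X:=X)).
Local Notation omega2 := (omega2 (R:=R) (X:=X)).
Local Notation emb := (emb (R:=R) (X:=X)).
Implicit Types (a b : fsum) (f g h u : X -> C) (x y : X) (c l : C).

Definition monom (k : int) (h : X -> C) : fsum :=
  fun m => if m == k then h else fun=> 0.

Definition fix_supported (a : fsum) := forall k y, a k y != 0 -> Fix `|k| y.

Lemma zpowN_id k y : zpow (- k) y = y <-> Fix `|k| y.
Proof.
case: k => [[|n]|n] //; change (iter n.+1 sigmai y = y <-> iter n.+1 sigma y = y).
have iterK m : cancel (iter m sigmai) (iter m sigma).
  by elim: m => // m IH z; rewrite iterSr iterS sigmaiK IH.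
have iterKi m : cancel (iter m sigma) (iter m sigmai).
  by elim: m => // m IH z; rewrite iterSr iterS sigmaK IH.
by split=> yE; [rewrite -{1}yE iterK | rewrite -{1}yE iterKi].
Qed.

Lemma continuous_zpow k : continuous (zpow k).
Proof. by case: k => n; exact: continuous_iter. Qed.

Lemma fmul_embl f a : fmul (emb f) a = fun m y => f y * a m y.
Proof.
apply/funext => m; apply/funext => y; rewrite /fmul (fsbigT_int1 (j := 0)).
  by rewrite /emb eqxx subr0 oppr0.
by move=> k /negbTE k0; rewrite /emb k0 mul0r.
Qed.

Lemma fmul_embr a f : fmul a (emb f) = fun m y => a m y * f (zpow (- m) y).
Proof.
apply/funext => m; apply/funext => y; rewrite /fmul (fsbigT_int1 (j := m)).
  by rewrite /emb subrr eqxx.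
by move=> k km; rewrite /emb subr_eq0 eq_sym (negbTE km) mulr0.
Qed.

Lemma fmul_monom p q h g :
  fmul (monom p h) (monom q g) = monom (p + q) (fun y => h y * g (zpow (- p) y)).
Proof.
apply/funext => m; apply/funext => y; rewrite /fmul (fsbigT_int1 (j := p)).
  rewrite /monom eqxx; have -> : (m - p == q) = (m == p + q) by rewrite subr_eq addrC.
  by case: ifP; rewrite ?mulr0.
by move=> k /negbTE kp; rewrite /monom kp mul0r.
Qed.

Lemma commutant00P a : commutant00 a <-> c00 a /\ fix_supported a.
Proof.
split=> [[a00 aC]|[a00 aS]]; split=> //.
  move=> k y aky; apply/zpowN_id/eqP; apply: contraT; rewrite eq_sym => yk.
  have [f [cf fy fky]] := exists_separating R hX cX (x := y) (y := zpow (- k) y) yk.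
  have := congr1 (fun b => b k y) (aC f cf); rewrite fmul_embl fmul_embr /= fy fky.
  by rewrite mul1r mulr0 => /eqP; rewrite (negbTE aky).
move=> f cf; apply/funext => m; apply/funext => y; rewrite fmul_embl fmul_embr.
have [->|amy] := eqVneq (a m y) 0; first by rewrite mulr0 mul0r.
by rewrite (proj2 (zpowN_id m y) (aS _ _ amy)) mulrC.
Qed.

Lemma commutant00_cont a k : commutant00 a -> continuous (a k).
Proof. by case=> [[_ ca] _]. Qed.

Lemma commutant00_supp a : commutant00 a -> fix_supported a.
Proof. by move=> /commutant00P[]. Qed.

Lemma commutant00_monom k h : continuous h ->
  (forall y, h y != 0 -> Fix `|k| y) -> commutant00 (monom k h).
Proof.
move=> ch hk; apply/commutant00P; split; first split.
- exists `|k|%N => m km; rewrite /monom ifN //.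
  by apply: contraTneq km => ->; rewrite ltnn.
- by move=> m; rewrite /monom; case: ifP => _; [exact: ch | exact: cst_continuous].
- move=> m y; rewrite /monom; case: (eqVneq m k) => [-> /hk //|_]; by rewrite eqxx.
Qed.

Lemma commutant00_emb f : continuous f -> commutant00 (emb f).
Proof. by move=> cf; apply: commutant00_monom. Qed.

Lemma commutant00_one : commutant00 (emb (fun=> 1)).
Proof. exact/commutant00_emb/cst_continuous. Qed.

Lemma commutant00_monom_coef a k : commutant00 a -> commutant00 (monom k (a k)).
Proof.
by move=> aC; apply: commutant00_monom; [exact: commutant00_cont | exact: commutant00_supp].
Qed.

Lemma commutant00_add a b : commutant00 a -> commutant00 b -> commutant00 (fadd a b).
Proof.
move=> /commutant00P[[[Na aN] ca] aS] /commutant00P[[[Nb bN] cb] bS].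
apply/commutant00P; split; first split.
- exists (maxn Na Nb) => k; rewrite gtn_max => /andP[/aN aE /bN bE].
  by apply/funext => y; rewrite /fadd aE bE addr0.
- by move=> k y; apply: cvgD; [exact: ca | exact: cb].
- move=> k y; rewrite /fadd; have [->|aky _] := eqVneq (a k y) 0; last exact: aS.
  by rewrite add0r; exact: bS.
Qed.

Lemma commutant00_scale l a : commutant00 a -> commutant00 (fscale l a).
Proof.
move=> /commutant00P[[[N aN] ca] aS]; apply/commutant00P; split; first split.
- by exists N => k /aN aE; apply/funext => y; rewrite /fscale aE mulr0.
- by move=> k y; apply: cvgM; [exact: cvg_cst | exact: ca].
- by move=> k y; rewrite /fscale mulf_eq0 negb_or => /andP[_ /aS].
Qed.

Lemma commutant00_mul a b : commutant00 a -> commutant00 b -> commutant00 (fmul a b).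
Proof.
move=> /commutant00P[[[Na aN] ca] aS] /commutant00P[[[Nb bN] cb] bS].
have fmulE m : fmul a b m =
    fun y => \sum_(k <- window Na) a k y * b (m - k) (zpow (- k) y).
  apply/funext => y; apply: fsbigT_window => k /aN ->; exact: mul0r.
apply/commutant00P; split; first split.
- exists (Na + Nb)%N => m mN; rewrite fmulE; apply/funext => y.
  apply: big1_seq => k /andP[_]; rewrite mem_window => kN.
  by rewrite bN ?mulr0 //; lia.
- move=> m; have cterm k : continuous (fun y => a k y * b (m - k) (zpow (- k) y)).
    move=> y; apply: cvgM; first exact: ca.
    by apply: continuous_comp; [exact: continuous_zpow | exact: cb].
  by rewrite fmulE; apply: continuous_big => [|k _]; [exact: add_continuous | exact: cterm].
- move=> m y /(fsbigN1 (f := fun _ k => a k y * b (m - k) (zpow (- k) y)) (x := tt)).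
  case=> k _; rewrite mulf_eq0 negb_or.
  case/andP=> /aS yk; rewrite (proj2 (zpowN_id _ _) yk) => /bS ymk.
  by have := Fix_absz_add yk ymk; rewrite addrC subrK.
Qed.

Lemma c00_vanishes (a : fsum) : c00 a -> exists N, forall x, vanishes_beyond N (a^~ x).
Proof. by case=> [[N aN] _]; exists N => x k /aN ->. Qed.

Lemma commutant00_supp_interior a k x : commutant00 a -> a k x != 0 -> (Fix `|k|)° x.
Proof.
move=> /commutant00P[[_ ca] aS] akx.
by apply: filterS (near_neq0 (ca k x) akx) => y /aS.
Qed.

Lemma commutant00_coef_eq0 a k x : commutant00 a -> ~ UFix sigma x -> k != 0 ->
  a k x = 0.
Proof.
move=> aC xU k0; apply/eqP; apply: contraT => akx; case: xU.
by exists `|k|%N; [rewrite /= absz_gt0 | exact: commutant00_supp_interior akx].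
Qed.

Lemma commutant00_coef_dvd a k x n : commutant00 a -> min_int_period sigma x n ->
  a k x != 0 -> (n%:Z %| k)%Z.
Proof.
move=> aC xn akx; rewrite dvdzE /=.
exact: min_int_period_dvd xn (commutant00_supp_interior aC akx).
Qed.

Lemma omega1_emb x f : omega1 x (emb f) = f x.
Proof. by rewrite /omega1 /emb eqxx. Qed.

Lemma omega2_single n x c j h : (0 < n)%N ->
  omega2 n x c (monom (j * n%:Z) h) = h x * c ^ j.
Proof.
move=> n0; have nz : n%:Z != 0 by rewrite eqz_nat -lt0n.
rewrite /omega2 (fsbigT_int1 (j := j)) /monom ?eqxx // => i ij.
by rewrite (inj_eq (mulIf nz)) (negbTE ij) mul0r.
Qed.

Lemma omega2_emb n x c f : (0 < n)%N -> omega2 n x c (emb f) = f x.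
Proof.
by move=> n0; rewrite -[emb f]/(monom (0 * n%:Z) f) omega2_single // expr0z mulr1.
Qed.

Lemma omega1_is_character x : ~ UFix sigma x -> is_character (omega1 x).
Proof.
move=> xU; split=> // [a b /set_mem aC _|].
  rewrite /omega1 /fmul (fsbigT_int1 (j := 0)) ?oppr0 ?subr0 // => k k0.
  by rewrite (commutant00_coef_eq0 aC xU k0) mul0r.
exists (emb (fun=> 1)); first exact: commutant00_one.
by rewrite omega1_emb oner_neq0.
Qed.

Lemma omega2_is_character x n c : min_int_period sigma x n -> c != 0 ->
  is_character (omega2 n x c).
Proof.
move=> xn c0; have n0 := xn.1; have nz : n%:Z != 0 by rewrite eqz_nat -lt0n.
split.
- move=> a b /set_mem[a00 _] /set_mem[b00 _].
  have [[Na aN] [Nb bN]] := (c00_vanishes a00, c00_vanishes b00).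
  have termN (d : fsum) : vanishes_beyond (Na + Nb) (d^~ x) ->
      vanishes_beyond (Na + Nb) (fun j => d (j * n%:Z) x * c ^ j).
    by move=> dN j /(vanishes_beyond_mulz n0 dN) ->; rewrite mul0r.
  rewrite /omega2 -(fsbigT_split (termN _ (vanishes_beyondW (leq_addr _ _) (aN x)))
    (termN _ (vanishes_beyondW (leq_addl _ _) (bN x)))).
  by apply: eq_fsbigr => j _; rewrite mulrDl.
- by move=> l a _; rewrite /omega2 mulr_fsumr; apply: eq_fsbigr => j _; rewrite mulrA.
- move=> a b /set_mem aC /set_mem bC.
  have [[Na aN] [Nb bN]] := (c00_vanishes aC.1, c00_vanishes bC.1).
  have xnj j : zpow (- (j * n%:Z)) x = x.
    by apply/zpowN_id; exact: Fix_mulz (interior_subset xn.2.1).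
  rewrite /omega2 -(@fsbigT_cauchy _ (Na + Nb)) //; last first.
  + exact: vanishes_beyond_mulz n0 (vanishes_beyondW (leq_addl _ _) (bN x)).
  + exact: vanishes_beyond_mulz n0 (vanishes_beyondW (leq_addr _ _) (aN x)).
  apply: eq_fsbigr => j _; congr (_ * _); rewrite /fmul -(fsbigT_mulz nz).
    by apply: eq_fsbigr => i _; rewrite xnj mulrBl.
  move=> k nk; apply/eqP; rewrite mulf_eq0; apply/orP; left; apply: contraNT nk.
  exact: commutant00_coef_dvd aC xn.
- exists (emb (fun=> 1)); first exact: commutant00_one.
  by rewrite omega2_emb // oner_neq0.
Qed.

Lemma is_character_eq w v : {in commutant00, w =1 v} -> is_character v -> is_character w.
Proof.
move=> wv [vD vZ vM [a0 a0C va0]]; split.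
- move=> a b aC bC; rewrite !wv ?vD //.
  by apply/mem_set/commutant00_add; exact/set_mem.
- move=> l a aC; rewrite !wv ?vZ //.
  by apply/mem_set/commutant00_scale; exact/set_mem.
- move=> a b aC bC; rewrite !wv ?vM //.
  by apply/mem_set/commutant00_mul; exact/set_mem.
- by exists a0; rewrite // wv //; exact: mem_set.
Qed.

Lemma exists_bump_Fix x n : (Fix n)° x ->
  exists u : X -> C, [/\ continuous u, u x = 1 & forall y, u y != 0 -> Fix n y].
Proof.
move=> xn; have [u [cu ux uU]] := exists_bump R hX cX (@open_interior _ (Fix n)) xn.
exists u; split=> // y; case: (pselect ((Fix n)° y)) => [/interior_subset //|/uU ->].
by rewrite eqxx.
Qed.

Lemma emb_add f g : fadd (emb f) (emb g) = emb (fun y => f y + g y).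
Proof.
by apply/funext => k; apply/funext => y; rewrite /fadd /emb; case: ifP; rewrite ?addr0.
Qed.

Lemma emb_mul f g : fmul (emb f) (emb g) = emb (fun y => f y * g y).
Proof.
rewrite fmul_embl; apply/funext => k; apply/funext => y.
by rewrite /emb; case: ifP; rewrite ?mulr0.
Qed.

Lemma emb_cst c : emb (fun=> c) = fscale c (emb (fun=> 1)).
Proof.
apply/funext => k; apply/funext => y.
by rewrite /fscale /emb; case: ifP; rewrite ?mulr1 ?mulr0.
Qed.

Lemma monom0 k : monom k (fun=> 0) = emb (fun=> 0).
Proof. by apply/funext => m; rewrite /monom /emb; case: ifP; case: ifP. Qed.

Definition restrict (s : seq int) (a : fsum) : fsum :=
  fun k => if k \in s then a k else fun=> 0.

Lemma commutant00_restrict s a : commutant00 a -> commutant00 (restrict s a).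
Proof.
move=> /commutant00P[[[N aN] ca] aS]; apply/commutant00P; split; first split.
- by exists N => k /aN aE; rewrite /restrict aE; case: ifP.
- by move=> k; rewrite /restrict; case: ifP => _; [exact: ca | exact: cst_continuous].
- by move=> k y; rewrite /restrict; case: ifP => _; [exact: aS | rewrite eqxx].
Qed.

Lemma restrict_nil a : restrict [::] a = emb (fun=> 0).
Proof. by apply/funext => k; rewrite /restrict /emb; case: ifP. Qed.

Lemma restrict_cons k s a : k \notin s ->
  restrict (k :: s) a = fadd (monom k (a k)) (restrict s a).
Proof.
move=> ks; apply/funext => m; apply/funext => y; rewrite /restrict /fadd /monom inE.
by case: (eqVneq m k) => [->|_] /=; rewrite ?(negbTE ks) ?addr0 ?add0r.
Qed.

Section Characters.
Variable w : fsum -> C.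
Hypothesis wchar : is_character w.

Lemma charD a b : commutant00 a -> commutant00 b -> w (fadd a b) = w a + w b.
Proof. by case: wchar => wD _ _ _ aC bC; apply: wD; exact: mem_set. Qed.

Lemma charZ l a : commutant00 a -> w (fscale l a) = l * w a.
Proof. by case: wchar => _ wZ _ _ aC; apply: wZ; exact: mem_set. Qed.

Lemma charM a b : commutant00 a -> commutant00 b -> w (fmul a b) = w a * w b.
Proof. by case: wchar => _ _ wM _ aC bC; apply: wM; exact: mem_set. Qed.

Lemma char_emb1 : w (emb (fun=> 1)) = 1.
Proof.
case: wchar => _ _ _ [a aC wa0].
have := charM aC commutant00_one; rewrite fmul_embr.
have -> : (fun m y => a m y * 1) = a by apply/funext => m; apply/funext => y; rewrite mulr1.
by rewrite -{1}[w a]mulr1 => /(mulfI wa0)/esym.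
Qed.

Lemma char_emb_cst c : w (emb (fun=> c)) = c.
Proof. by rewrite emb_cst (charZ _ commutant00_one) char_emb1 mulr1. Qed.

Lemma char_embD f g : continuous f -> continuous g ->
  w (emb (fun y => f y + g y)) = w (emb f) + w (emb g).
Proof.
by move=> cf cg; rewrite -emb_add (charD (commutant00_emb cf) (commutant00_emb cg)).
Qed.

Lemma char_embM f g : continuous f -> continuous g ->
  w (emb (fun y => f y * g y)) = w (emb f) * w (emb g).
Proof.
by move=> cf cg; rewrite -emb_mul (charM (commutant00_emb cf) (commutant00_emb cg)).
Qed.

Lemma char_ker_root g : continuous g -> w (emb g) = 0 -> exists y, g y = 0.
Proof.
move=> cg wg; apply: contrapT => /forallNP g0.
have gV : continuous (fun y => (g y)^-1).
  by move=> y; apply: continuousV; [exact/eqP/g0 | exact: cg].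
have := char_embM cg gV; rewrite wg mul0r.
have -> : (fun y => g y * (g y)^-1) = fun=> 1.
  by apply/funext => y; rewrite mulfV //; exact/eqP/g0.
by rewrite char_emb1 => /eqP; rewrite oner_eq0.
Qed.

Lemma char_common_root :
  exists x, forall g, continuous g -> w (emb g) = 0 -> g x = 0.
Proof.
pose K := [set g : X -> C | continuous g /\ w (emb g) = 0].
pose Z g := [set y | g y = 0].
have ZF : ProperFilter (filter_from K Z).
  apply: filter_from_proper => [|g [cg wg]]; last exact: char_ker_root cg wg.
  apply: filter_from_filter.
    by exists (fun=> 0); split; [exact: cst_continuous | exact: char_emb_cst].
  move=> g1 g2 [c1 w1] [c2 w2].
  have conj_cont g : continuous g -> continuous (fun y => (g y)^*%R).
    by move=> cg y; apply: continuous_comp; [exact: cg | exact: continuous_conjC].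
  have c1' : continuous (fun y => g1 y * (g1 y)^*%R).
    by move=> y; apply: cvgM; [exact: c1 | exact: conj_cont].
  have c2' : continuous (fun y => g2 y * (g2 y)^*%R).
    by move=> y; apply: cvgM; [exact: c2 | exact: conj_cont].
  exists (fun y => g1 y * (g1 y)^*%R + g2 y * (g2 y)^*%R).
    split; first by move=> y; apply: cvgD; [exact: c1' | exact: c2'].
    rewrite (char_embD c1' c2') (char_embM c1 (conj_cont _ c1)).
    by rewrite (char_embM c2 (conj_cont _ c2)) w1 w2 !mul0r addr0.
  move=> y /eqP; rewrite /Z /= paddr_eq0 ?mul_conjC_ge0 // !mul_conjC_eq0.
  by case/andP=> /eqP ? /eqP.
have [x [_ xZ]] := cX ZF filterT.
exists x => g cg wg; apply/eqP; apply: contraT => gx.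
have ZgF : filter_from K Z (Z g) by exists g.
by have [y [/= -> /eqP]] := xZ _ _ ZgF (near_neq0 (cg x) gx).
Qed.

Lemma char_emb_eval : exists x, forall f, continuous f -> w (emb f) = f x.
Proof.
have [x xZ] := char_common_root; exists x => f cf; apply/esym/eqP.
rewrite -subr_eq0; apply/eqP; apply: (xZ (fun y => f y - w (emb f))).
  by move=> y; apply: cvgB; [exact: cf | exact: cvg_cst].
have cc : continuous (fun _ : X => - w (emb f)) by exact: cst_continuous.
by rewrite (char_embD cf cc) char_emb_cst subrr.
Qed.

Lemma char_restrict s a : uniq s -> commutant00 a ->
  w (restrict s a) = \sum_(k <- s) w (monom k (a k)).
Proof.
move=> + aC; elim: s => [_|k s IH /= /andP[ks us]].
  by rewrite restrict_nil char_emb_cst big_nil.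
rewrite restrict_cons // big_cons -IH //.
exact: charD (commutant00_monom_coef _ aC) (commutant00_restrict _ aC).
Qed.

Lemma char_sum_monom a : commutant00 a ->
  w a = \sum_(k \in [set: int]) w (monom k (a k)).
Proof.
move=> aC; have [[N aN] _] := aC.1.
have -> : \sum_(k \in [set: int]) w (monom k (a k)) =
    \sum_(k <- window N) w (monom k (a k)).
  by apply: fsbigT_window => k /aN ->; rewrite monom0 char_emb_cst.
rewrite -char_restrict ?fset_uniq //; congr w; apply/funext => k.
by rewrite /restrict mem_window; case: leqP => // /aN ->.
Qed.

Section PointEvaluation.
Variable x : X.
Hypothesis wx : forall f, continuous f -> w (emb f) = f x.

Lemma char_monom_mul k h g : continuous h -> continuous g ->
  (forall y, h y != 0 -> Fix `|k| y) ->
  w (monom k (fun y => h y * g y)) = w (monom k h) * g x.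
Proof.
move=> ch cg hk; rewrite -(wx cg) -(charM (commutant00_monom ch hk) (commutant00_emb cg)).
congr w; rewrite fmul_embr; apply/funext => m; apply/funext => y; rewrite /monom.
case: (eqVneq m k) => [->|_]; last by rewrite mul0r.
have [->|hy] := eqVneq (h y) 0; first by rewrite !mul0r.
by rewrite (proj2 (zpowN_id _ _) (hk _ hy)).
Qed.

Lemma char_monom_eq0 k h : continuous h -> (forall y, h y != 0 -> Fix `|k| y) ->
  h x = 0 -> w (monom k h) = 0.
Proof.
move=> ch hk hx0; pose t y := h y / sqrt_norm (h y).
have ct : continuous t.
  by move=> y; apply: (@continuous_comp _ _ _ h (fun z : C => z / sqrt_norm z));
    [exact: ch | exact: continuous_div_sqrt_norm].
have csh : continuous (fun y => sqrt_norm (h y)).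
  by move=> y; apply: (@continuous_comp _ _ _ h (fun z : C => sqrt_norm z));
    [exact: ch | exact: continuous_sqrt_norm].
have tk y : t y != 0 -> Fix `|k| y.
  by rewrite /t; have [->|/hk //] := eqVneq (h y) 0; rewrite mul0r eqxx.
have -> : h = fun y => t y * sqrt_norm (h y).
  by apply/funext => y; rewrite mulrC sqrt_normK.
by rewrite (char_monom_mul ct csh tk) hx0 sqrt_norm0 mulr0.
Qed.

Lemma char_eq_omega1 : ~ UFix sigma x -> {in commutant00, w =1 omega1 x}.
Proof.
move=> xU a /set_mem aC; rewrite char_sum_monom // (fsbigT_int1 (j := 0)).
  exact: wx (commutant00_cont aC).
move=> k k0; apply: char_monom_eq0.
- exact: commutant00_cont aC.
- exact: (commutant00_supp (k := k) aC).
- exact: commutant00_coef_eq0 aC xU k0.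
Qed.

Section PeriodicPoint.
Variables (n : nat) (u : X -> C).
Hypotheses (xn : min_int_period sigma x n) (cu : continuous u) (ux : u x = 1).
Hypothesis uFix : forall y, u y != 0 -> Fix n y.

Let c := w (monom n%:Z u).

Lemma char_monom_succ j h : continuous h -> (forall y, h y != 0 -> Fix n y) ->
  w (monom ((j + 1) * n%:Z) h) = w (monom (j * n%:Z) h) * c.
Proof.
move=> ch hn; have hnj i y : h y != 0 -> Fix `|i * n%:Z| y by move/hn/Fix_mulz.
rewrite -[LHS]mulr1 -ux -(char_monom_mul ch cu (hnj _)).
have -> : monom ((j + 1) * n%:Z) (fun y => h y * u y) =
    fmul (monom (j * n%:Z) h) (monom n%:Z u).
  rewrite fmul_monom mulrDl mul1r; congr monom; apply/funext => y.
  have [->|hy] := eqVneq (h y) 0; first by rewrite !mul0r.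
  by rewrite (proj2 (zpowN_id _ _) (hnj _ _ hy)).
exact: charM (commutant00_monom ch (hnj j)) (commutant00_monom (k := n%:Z) cu uFix).
Qed.

Lemma char_period_neq0 : c != 0.
Proof.
apply/eqP => c0; have := char_monom_succ (- 1) cu uFix.
rewrite addNr mul0r -[monom 0 u]/(emb u) (wx cu) ux c0 mulr0.
by move/eqP; rewrite oner_eq0.
Qed.

Lemma char_monom_mulz j h : continuous h -> (forall y, h y != 0 -> Fix n y) ->
  w (monom (j * n%:Z) h) = h x * c ^ j.
Proof.
move=> ch hn; have c0 := char_period_neq0.
have cS i : c ^ (i + 1) = c ^ i * c by rewrite expfzDr ?expr1z.
elim/int_rect: j => [|k IH|k IH].
- by rewrite mul0r expr0z mulr1; exact: wx.
- by rewrite intS addrC (char_monom_succ _ ch hn) IH cS mulrA.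
- apply: (mulIf c0); rewrite -(char_monom_succ _ ch hn) -mulrA -cS.
  have -> : - k.+1%:Z + 1 = - k%:Z by rewrite intS opprD addrAC addNr add0r.
  exact: IH.
Qed.

Lemma char_monom_coef a k : commutant00 a ->
  w (monom k (a k)) = if (n%:Z %| k)%Z then a k x * c ^ (k %/ n%:Z)%Z else 0.
Proof.
move=> aC; have cak := commutant00_cont (k := k) aC.
case: ifPn => nk; last first.
  apply: (char_monom_eq0 cak (commutant00_supp (k := k) aC)).
  by apply/eqP; apply: contraNT nk => /(commutant00_coef_dvd aC xn).
have cau : continuous (fun y => a k y * u y).
  by move=> y; apply: cvgM; [exact: cak | exact: cu].
have auFix y : a k y * u y != 0 -> Fix n y.
  by rewrite mulf_eq0 negb_or => /andP[_ /uFix].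
rewrite -[LHS]mulr1 -ux -(char_monom_mul cak cu (commutant00_supp (k := k) aC)).
by rewrite -{1}(divzK nk) (char_monom_mulz _ cau auFix) ux mulr1.
Qed.

Lemma char_eq_omega2 : {in commutant00, w =1 omega2 n x c}.
Proof.
move=> a /set_mem aC; have nz : n%:Z != 0 by rewrite eqz_nat -lt0n xn.1.
have coef0 k : ~~ (n%:Z %| k)%Z -> w (monom k (a k)) = 0.
  by move=> nk; rewrite char_monom_coef // (negbTE nk).
rewrite char_sum_monom // -(fsbigT_mulz nz coef0); apply: eq_fsbigr => j _.
by rewrite char_monom_coef // dvdz_mull ?dvdzz // mulzK.
Qed.

End PeriodicPoint.
End PointEvaluation.

Lemma char_cases :
  (exists x, ~ UFix sigma x /\ {in commutant00, w =1 omega1 x}) \/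
  (exists x n c, min_int_period sigma x n /\ c != 0 /\
                 {in commutant00, w =1 omega2 n x c}).
Proof.
have [x wx] := char_emb_eval.
have [xU|xU] := pselect (UFix sigma x); last first.
  by left; exists x; split; last exact: char_eq_omega1.
have [n xn] := UFix_min_int_period xU.
have [u [cu ux uFix]] := exists_bump_Fix xn.2.1.
right; exists x, n, (w (monom n%:Z u)); split=> //; split.
  by apply: char_period_neq0; eassumption.
by apply: char_eq_omega2; eassumption.
Qed.

End Characters.

Lemma is_characterP w : is_character w <->
  (exists x, ~ UFix sigma x /\ {in commutant00, w =1 omega1 x}) \/
  (exists x n c, min_int_period sigma x n /\ c != 0 /\
                 {in commutant00, w =1 omega2 n x c}).
Proof.
split; first exact: char_cases.
case=> [[x [xU wx]]|[x [n [c [xn [c0 wx]]]]]]; apply: is_character_eq wx _.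
  exact: omega1_is_character.
exact: omega2_is_character.
Qed.

Lemma eval_eq_point (F G : fsum -> C) x y :
  (forall f, continuous f -> F (emb f) = f x) ->
  (forall f, continuous f -> G (emb f) = f y) ->
  {in commutant00, F =1 G} -> x = y.
Proof.
move=> Fx Gy FG; apply/eqP; apply: contraT => xy.
have [f [cf fx fy]] := exists_separating R hX cX xy.
have := FG (emb f) (mem_set (commutant00_emb cf)); rewrite Fx // Gy // fx fy.
by move/eqP; rewrite oner_eq0.
Qed.

Lemma omega1_inj x y : {in commutant00, omega1 x =1 omega1 y} -> x = y.
Proof. by apply: eval_eq_point => f _; rewrite omega1_emb. Qed.

Lemma omega2_inj x y n m c d : min_int_period sigma x n -> min_int_period sigma y m ->
  {in commutant00, omega2 n x c =1 omega2 m y d} -> x = y /\ c = d.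
Proof.
move=> xn ym ceqd; have xy : x = y.
  by apply: eval_eq_point ceqd => f _; rewrite omega2_emb ?xn.1 ?ym.1.
subst y; have nm := min_int_period_uniq xn ym; subst m; split=> //.
have [u [cu ux uFix]] := exists_bump_Fix xn.2.1.
have uC : commutant00 (monom (1 * n%:Z) u).
  by apply: commutant00_monom cu _ => y /uFix; exact: Fix_mulz.
by have := ceqd _ (mem_set uC); rewrite !omega2_single ?xn.1 // ux !mul1r !expr1z.
Qed.

Lemma omega1_neq_omega2 x y n c : ~ UFix sigma x -> min_int_period sigma y n ->
  ~ {in commutant00, omega1 x =1 omega2 n y c}.
Proof.
move=> xU yn eq1; have xy : x = y.
  by apply: eval_eq_point eq1 => f _; rewrite ?omega1_emb ?omega2_emb ?yn.1.
by apply: xU; rewrite xy; exists n; [exact: yn.1 | exact: yn.2.1].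
Qed.

End Commutant.

Theorem lemma3p6 (R : realType) (X : topologicalType) (sigma sigmai : X -> X) :
  hausdorff_space X -> compact [set: X] -> [set: X] !=set0 ->
  continuous sigma -> continuous sigmai ->
  cancel sigma sigmai -> cancel sigmai sigma ->
  (forall w : fsum R X -> Cplx R,
     is_character sigma sigmai w <->
     ((exists x : X, ~ UFix sigma x /\
          {in commutant00 (R:=R) sigma sigmai, w =1 omega1 (R:=R) x})
      \/ (exists (x : X) (n : nat) (c : Cplx R),
            min_int_period sigma x n /\ c != 0 /\
            {in commutant00 (R:=R) sigma sigmai, w =1 omega2 n x c}))) /\
  (forall x y : X, ~ UFix sigma x -> ~ UFix sigma y ->
     {in commutant00 (R:=R) sigma sigmai, omega1 (R:=R) x =1 omega1 (R:=R) y} -> x = y) /\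
  (forall (x y : X) (n m : nat) (c d : Cplx R),
     min_int_period sigma x n -> min_int_period sigma y m -> c != 0 -> d != 0 ->
     {in commutant00 (R:=R) sigma sigmai, omega2 n x c =1 omega2 m y d} ->
     x = y /\ c = d) /\
  (forall (x y : X) (n : nat) (c : Cplx R),
     ~ UFix sigma x -> min_int_period sigma y n -> c != 0 ->
     ~ {in commutant00 (R:=R) sigma sigmai, omega1 (R:=R) x =1 omega2 n y c}).
Proof.
move=> hX cX _ cs csi sigmaK sigmaiK; split.
  by move=> w; apply: is_characterP.
split; first by move=> x y _ _; apply: omega1_inj.
split; first by move=> x y n m c d xn ym _ _; apply: omega2_inj.
by move=> x y n c xU yn _; apply: omega1_neq_omega2.
Qed.
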